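(* Let $n\ge3$, let $H$ be a non-trivial finitely generated abelian group, let $G$ be a non-trivial group with a surjective homomorphism $\sigma\colon G\to S_n$, and let $W=H\wr_\sigma G=H^n\rtimes_\sigma G$. Assume that every abelian normal subgroup of $W$ is contained in $H^n$. Then $H^n$ is a characteristic subgroup of $W$.
   Context: $H\wr_\sigma G=H^n\rtimes_\sigma G$ is the semidirect product in which $G$ acts on $H^n$ by permuting coordinates through $\sigma$: $g\cdot(h_1,\dots,h_n)=(h_{\sigma(g)(1)},\dots,h_{\sigma(g)(n)})$ (with the composition convention in $S_n$ making this a left action); elements are pairs $(\mathbf h,g)$ with $(\mathbf h,g)(\mathbf k,x)=(\mathbf h\cdot g\mathbf k,gx)$, and $H^n$ is identified with $\{(\mathbf h,1)\}$. *)

From HB Require Import structures.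
From mathcomp Require Import all_boot all_order all_fingroup all_algebra.
Set Implicit Arguments. Unset Strict Implicit. Unset Printing Implicit Defensive.
Import GRing.Theory.

Section GroupNotions.
Variable W : groupType.
Local Open Scope group_scope.

Definition is_subgroup (S : W -> Prop) : Prop :=
  [/\ S 1, (forall x y, S x -> S y -> S (x * y)) & (forall x, S x -> S x^-1)].

Definition is_normal_subgroup (S : W -> Prop) : Prop :=
  is_subgroup S /\ (forall x y, S x -> S (x ^ y)).

Definition is_abelian_set (S : W -> Prop) : Prop :=
  forall x y, S x -> S y -> x * y = y * x.

Definition is_automorphism (f : W -> W) : Prop :=
  {morph f : x y / x * y} /\ bijective f.

Definition is_characteristic (S : W -> Prop) : Prop :=
  is_subgroup S /\
  forall f, is_automorphism f -> forall y, S y <-> exists2 x, S x & f x = y.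

End GroupNotions.

Definition finitely_generated_zmod (H : zmodType) : Prop :=
  exists s : seq H, forall h : H,
    exists c : 'I_(size s) -> int, h = (\sum_(i < size s) s`_i *~ c i)%R.

Definition nontrivial_zmod (H : zmodType) : Prop := exists h : H, h != 0%R.

Definition nontrivial_group (G : groupType) : Prop := exists g : G, g != 1%g.

(* (s * t) i = t (s i), so a homomorphism sigma makes this a left action.    *)

(* The carrier depends (trivially) on sigma so that the group structure,
   which does depend on sigma, can be found by canonical-structure inference. *)
Definition wreath (n : nat) (H : zmodType) (G : groupType)
  (sigma : {multiplicative G -> {perm 'I_n}}) : Type :=
  ({ffun 'I_n -> H} * G)%type.

Section Wreath.
Variables (n : nat) (H : zmodType) (G : groupType)
  (sigma : {multiplicative G -> {perm 'I_n}}).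
Local Open Scope group_scope.

Local Notation wreath := (@wreath n H G sigma).
HB.instance Definition _ := Choice.on wreath.

Definition wact (g : G) (h : {ffun 'I_n -> H}) : {ffun 'I_n -> H} :=
  [ffun i => h (sigma g i)].

Definition wmul (x y : wreath) : wreath :=
  ([ffun i => (x.1 i + wact x.2 y.1 i)%R], x.2 * y.2).
Definition wone : wreath := ([ffun=> 0%R], 1).
Definition winv (x : wreath) : wreath :=
  (wact x.2^-1 [ffun i => (- x.1 i)%R], x.2^-1).

Lemma sigma1 : sigma 1 = 1.
Proof.
have e : sigma (1 * 1) = sigma 1 * sigma 1 := gmulfM _ _.
rewrite monoid.mulg1 in e.
apply/permP=> i; rewrite perm1; apply: (@perm_inj _ (sigma 1)).
by rewrite -permM -e.
Qed.

Lemma wactM g g' h : wact (g * g') h = wact g (wact g' h).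
Proof. by apply/ffunP=> i; rewrite !ffunE gmulfM permM. Qed.

Lemma wact1 h : wact 1 h = h.
Proof. by apply/ffunP=> i; rewrite !ffunE sigma1 perm1. Qed.

Lemma wmulA : associative wmul.
Proof.
case=> [a g] [b k] [c l]; rewrite /wmul /=; congr (_, _); last exact: monoid.mulgA.
by apply/ffunP=> i; rewrite !ffunE addrA gmulfM permM.
Qed.

Lemma wmul1 : left_id wone wmul.
Proof.
case=> [a g]; rewrite /wmul /= monoid.mul1g; congr (_, _).
by apply/ffunP=> i; rewrite !ffunE sigma1 perm1 add0r.
Qed.

Lemma winvK : involutive winv.
Proof.
case=> [a g]; rewrite /winv /= monoid.invgK; congr (_, _).
by apply/ffunP=> i; rewrite !ffunE -(permM (sigma g)) -gmulfM monoid.mulgV sigma1 perm1 opprK.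
Qed.

Lemma winvM : {morph winv : x y / wmul x y >-> wmul y x}.
Proof.
case=> [a g] [b k]; rewrite /winv /wmul /= monoid.invgM; congr (_, _).
apply/ffunP=> i; rewrite !ffunE opprD addrC; congr (_ + _)%R.
  by rewrite -(permM (sigma (k^-1 * g^-1))) -gmulfM -monoid.mulgA monoid.mulVg monoid.mulg1.
by rewrite -(permM (sigma k^-1)) -gmulfM.
Qed.

HB.instance Definition _ :=
  isStarMonoid.Build wreath wmulA wmul1 winvK winvM.

Lemma wmulV : left_inverse (monoid.one : wreath) (@monoid.inv wreath) (@monoid.mul wreath).
Proof.
case=> [a g]; rewrite /monoid.mul /= /wmul /winv /= monoid.mulVg; congr (_, _).
by apply/ffunP=> i; rewrite !ffunE addNr.
Qed.

HB.instance Definition _ := StarMonoid_isGroup.Build wreath wmulV.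

Definition base : wreath -> Prop := fun w => w.2 = 1.

End Wreath.

From HB Require Import structures.
From mathcomp Require Import all_boot all_order all_fingroup all_algebra.

Set Implicit Arguments.
Unset Strict Implicit.
Unset Printing Implicit Defensive.
Import GRing.Theory.

(* H^n is an abelian normal subgroup of W, and by hypothesis it contains every
   abelian normal subgroup, so it is the largest one.  Automorphisms map abelian
   normal subgroups to abelian normal subgroups, hence both f(H^n) and
   f^-1(H^n) lie in H^n for every automorphism f. *)

Section Automorphisms.
Variable W : groupType.
Local Open Scope group_scope.

Definition image_set (f : W -> W) (S : W -> Prop) : W -> Prop :=
  fun y => exists2 x, S x & f x = y.

Section Morphism.
Variables (f : W -> W) (fM : {morph f : x y / x * y}).

Lemma morph1g : f 1 = 1.
Proof. by apply: (@mulgI _ (f 1)); rewrite -fM !mulg1. Qed.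

Lemma morphVg x : f x^-1 = (f x)^-1.
Proof. by apply: (@mulgI _ (f x)); rewrite -fM !mulgV morph1g. Qed.

Lemma morphJg x y : f (x ^ y) = f x ^ f y.
Proof. by rewrite !conjgE !fM morphVg. Qed.

End Morphism.

Lemma automorphism_inv (f g : W -> W) :
  is_automorphism f -> cancel f g -> cancel g f -> is_automorphism g.
Proof.
move=> [fM _] fK gK; split; last by exists f.
by move=> a b; apply: (can_inj fK); rewrite fM !gK.
Qed.

Lemma image_normal_subgroup (f : W -> W) (S : W -> Prop) :
  is_automorphism f -> is_normal_subgroup S ->
  is_normal_subgroup (image_set f S).
Proof.
move=> [fM [g _ gK]] [[S1 SM SV] SJ]; split; first split.
- by exists 1; rewrite ?morph1g.
- by move=> _ _ [x Sx <-] [y Sy <-]; exists (x * y); [apply: SM | rewrite fM].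
- by move=> _ [x Sx <-]; exists x^-1; [apply: SV | rewrite morphVg].
- move=> _ y [x Sx <-]; exists (x ^ g y); first exact: SJ.
  by rewrite morphJg // gK.
Qed.

Lemma image_abelian_set (f : W -> W) (S : W -> Prop) :
  {morph f : x y / x * y} -> is_abelian_set S -> is_abelian_set (image_set f S).
Proof. by move=> fM Sab _ _ [x Sx <-] [y Sy <-]; rewrite -!fM Sab. Qed.

Lemma max_abelian_normal_characteristic (S : W -> Prop) :
  is_normal_subgroup S -> is_abelian_set S ->
  (forall A, is_normal_subgroup A -> is_abelian_set A -> forall w, A w -> S w) ->
  is_characteristic S.
Proof.
move=> Snormal Sab Smax; split; first by case: Snormal.
have image_sub f : is_automorphism f -> forall w, image_set f S w -> S w.
  move=> fA; apply: Smax; first exact: image_normal_subgroup.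
  by apply: image_abelian_set Sab; case: fA.
move=> f fA y; split; last exact: image_sub.
have [_ [g fK gK]] := fA; move=> Sy; exists (g y); last by rewrite gK.
by apply: (image_sub g (automorphism_inv fA fK gK)); exists y.
Qed.

End Automorphisms.

Section BaseGroup.
Variables (n : nat) (H : zmodType) (G : groupType)
  (sigma : {multiplicative G -> {perm 'I_n}}).
Local Open Scope group_scope.

Lemma base_normal_subgroup : is_normal_subgroup (@base n H G sigma).
Proof.
split; first split.
- by [].
- by move=> x y Bx By; change (x.2 * y.2 = 1); rewrite Bx By mulg1.
- by move=> x Bx; change (x.2^-1 = 1); rewrite Bx invg1.
- by move=> x y Bx; change (y.2^-1 * (x.2 * y.2) = 1); rewrite Bx mul1g mulVg.
Qed.

Lemma base_abelian_set : is_abelian_set (@base n H G sigma).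
Proof.
case=> [a g] [b k]; rewrite /base /= => -> ->.
rewrite /monoid.mul /= /wmul /=; congr (_, _).
by apply/ffunP=> i; rewrite !ffunE sigma1 perm1 addrC.
Qed.

End BaseGroup.

Theorem theorem3p10 (n : nat) (H : zmodType) (G : groupType)
    (sigma : {multiplicative G -> {perm 'I_n}}) :
  3 <= n ->
  nontrivial_zmod H -> finitely_generated_zmod H ->
  nontrivial_group G ->
  (forall s : {perm 'I_n}, exists g : G, sigma g = s) ->
  (forall A : @wreath n H G sigma -> Prop,
      is_normal_subgroup A -> is_abelian_set A ->
      forall w, A w -> @base n H G sigma w) ->
  is_characteristic (@base n H G sigma).
Proof.
move=> _ _ _ _ _ base_max.
apply: max_abelian_normal_characteristic base_max.
- exact: base_normal_subgroup.
- exact: base_abelian_set.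
Qed.
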